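(* Let $T$ be a table and $C_T$ the event-log of Algorithm 2 run on $T$. If a partial witness tree $\tau_S$ occurs in $C_T$, then (1) $\tau_S$ is proper, and (2) $\tau_S$ passes the $T$-check.
   Context: Setting: $\mathcal{P}$ is a finite set of mutually independent discrete random variables with finite domains; $\mathcal{A}$ is a finite set of events determined by them; $\mathrm{vbl}(A)$ is the minimal set of variables determining $A$; the dependency graph joins $A\neq B$ iff $\mathrm{vbl}(A)\cap\mathrm{vbl}(B)\neq\emptyset$; $\Gamma(A)$ is the neighborhood and $\Gamma^+(A)=\Gamma(A)\cup\{A\}$. Binary trees: for each $A\in\mathcal{A}$ a rooted binary tree $\mathbb{B}_A$ is fixed whose vertices are labeled by nonempty subsets of $\mathrm{vbl}(A)$: the root is labeled $\mathrm{vbl}(A)$, leaves are labeled by singletons, and each non-leaf vertex has two children whose labels are disjoint and whose union is its label. $\mathbb{B}_A$ also denotes the set of these labels. Partial witness tree $\tau_S$: a finite rooted tree whose root is labeled by some $S\in\mathbb{B}_A$ for some $A\in\mathcal{A}$, and whose other vertices are labeled by events; each child of the root is labeled by an event $B$ with $\mathrm{vbl}(B)\cap S\ne\emptyset$, and each child of a non-root vertex labeled $B$ is labeled by an element of $\Gamma^+(B)$. The label of a non-root vertex $v$ is written $[v]$. It is proper if the children of every vertex have pairwise distinct labels. Table: $T$ assigns to each variable $p$ a sequence of values $T(p,1),T(p,2),\dots$ in its domain. Algorithm 2 on $T$: set a pointer $t_p=1$ for each $p$; while some event happens under the evaluation $p=T(p,t_p)$ for all $p$, pick one such event $A$ by a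 fixed deterministic rule and increment $t_p$ for every $p\in\mathrm{vbl}(A)$. The event-log $C_T$ is the sequence $C_T(1),C_T(2),\dots$ of events picked in successive iterations. For an event-log $C$, a step $t$ and $S\in\mathbb{B}_{C(t)}$, the tree $\tau_C(t,S)$ is built as follows: start with a single root labeled $S$; for $i=t-1,t-2,\dots,1$: (i) if some non-root vertex $v$ satisfies $C(i)\in\Gamma^+([v])$, choose such a $v$ of maximum distance from the root (ties broken arbitrarily) and attach to it a new child labeled $C(i)$; (ii) otherwise, if $S\cap\mathrm{vbl}(C(i))\ne\emptyset$, attach a new child labeled $C(i)$ to the root; (iii) otherwise do nothing. A partial witness tree $\tau_S$ occurs in $C$ if there is $t$ with $S\in\mathbb{B}_{C(t)}$ and $\tau_S=\tau_C(t,S)$. $T$-check of $\tau_S$: visit the non-root vertices in order of decreasing depth; at a vertex labeled $B$, for each $p\in\mathrm{vbl}(B)$ take the first not-yet-used value of row $p$ of $T$ (row $p$ is consumed in order $T(p,1),T(p,2),\dots$) and check whether $B$ happens under these values. The $T$-check passes if every visited event happens. *)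

From mathcomp Require Import all_boot.
Set Implicit Arguments. Unset Strict Implicit. Unset Printing Implicit Defensive.

Section MT.
Variable V : finType.
Variable D : V -> finType.

Definition Omega := {dffun forall p : V, D p}.

(* an event is a set of assignments; A happens under w iff w \in A *)

Definition determines (S : {set V}) (A : {set Omega}) : bool :=
  [forall w : Omega, forall w' : Omega,
     [forall p in S, w p == w' p] ==> ((w \in A) == (w' \in A))].

(* vbl(A): the minimal set of variables determining A
   (= intersection of all determining sets, which is itself determining) *)
Definition vbl (A : {set Omega}) : {set V} :=
  \bigcap_(S : {set V} | determines S A) S.

Definition inGp (Acal : {set {set Omega}}) (A B : {set Omega}) : bool :=
  (B == A) || [&& B \in Acal, B != A & vbl A :&: vbl B != set0].

Inductive btree := BLeaf of V | BNode of btree & btree.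

Fixpoint blabel (t : btree) : {set V} :=
  match t with BLeaf p => [set p] | BNode l r => blabel l :|: blabel r end.

Fixpoint blabels (t : btree) : {set {set V}} :=
  match t with
  | BLeaf p => [set [set p]]
  | BNode l r => blabel t |: (blabels l :|: blabels r)
  end.

(* children of every internal vertex have disjoint labels (their union is the
   label of the parent by construction of blabel; leaves are singletons) *)
Fixpoint btree_wf (t : btree) : bool :=
  match t with
  | BLeaf _ => true
  | BNode l r => [disjoint blabel l & blabel r] && btree_wf l && btree_wf r
  end.

Inductive wtree := WNode of {set Omega} & seq wtree.

Definition wlab (t : wtree) := let: WNode a _ := t in a.

(* equality of labelled rooted trees up to reordering of children *)
Inductive teq : wtree -> wtree -> Prop :=
  | teq_node a cs ds : feq cs ds -> teq (WNode a cs) (WNode a ds)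
with feq : seq wtree -> seq wtree -> Prop :=
  | feq_nil : feq [::] [::]
  | feq_cons t t' cs ds1 ds2 :
      teq t t' -> feq cs (ds1 ++ ds2) -> feq (t :: cs) (ds1 ++ t' :: ds2).

(* list of (depth, label) of all vertices; the root of a partial witness tree
   has depth 0, so the forest of its children starts at depth 1 *)
Fixpoint vlistT (d : nat) (t : wtree) : seq (nat * {set Omega}) :=
  let: WNode a cs := t in (d, a) :: flatten (map (vlistT d.+1) cs).
Definition vlistF (d : nat) (F : seq wtree) := flatten (map (vlistT d) F).

Fixpoint properT (t : wtree) : bool :=
  let: WNode _ cs := t in uniq (map wlab cs) && all properT cs.
Definition proper_pwt (F : seq wtree) : bool :=
  uniq (map wlab F) && all properT F.

(* a partial witness tree tau_S is represented by its root label S and the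
   forest F of subtrees hanging from the root *)
Fixpoint pwt_sub (Acal : {set {set Omega}}) (t : wtree) : bool :=
  let: WNode a cs := t in
  all (fun c => inGp Acal a (wlab c)) cs && all (pwt_sub Acal) cs.

Definition is_pwt (Acal : {set {set Omega}}) (BT : {set Omega} -> btree)
    (S : {set V}) (F : seq wtree) : Prop :=
  [/\ exists2 A, A \in Acal & S \in blabels (BT A),
      all (fun v => v.2 \in Acal) (vlistF 1 F),
      all (fun c => vbl (wlab c) :&: S != set0) F
    & all (pwt_sub Acal) F].

(* table: T p i is the value T(p,i), i = 1, 2, ... (T p 0 is unused) *)
Definition evalT (T : forall p : V, nat -> D p) (ptr : V -> nat) : Omega :=
  [ffun p => T p (ptr p)].

Definition alg_step (Acal : {set {set Omega}}) (T : forall p : V, nat -> D p)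
    (rule : seq {set Omega} -> {set {set Omega}} -> {set Omega})
    (st : (V -> nat) * seq {set Omega}) : (V -> nat) * seq {set Omega} :=
  let: (ptr, log) := st in
  let H := [set A in Acal | evalT T ptr \in A] in
  if H == set0 then st
  else let A := rule log H in
       (fun p => ptr p + (p \in vbl A), rcons log A).

(* the first (at most) n entries C_T(1), ..., C_T(n) of the event-log *)
Definition alg_log Acal T rule (n : nat) : seq {set Omega} :=
  (iter n (alg_step Acal T rule) (fun _ => 1, [::])).2.

Fixpoint attachF (Acal : {set {set Omega}}) (B : {set Omega}) (d : nat)
    (F F' : seq wtree) : Prop :=
  match d with
  | 0 => False
  | d'.+1 =>
    exists F1 a cs F2, F = F1 ++ WNode a cs :: F2 /\
      (if d' is 0 then inGp Acal a B /\ F' = F1 ++ WNode a (WNode B [::] :: cs) :: F2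
       else exists cs', attachF Acal B d' cs cs' /\ F' = F1 ++ WNode a cs' :: F2)
  end.

Definition tau_step (Acal : {set {set Omega}}) (S : {set V}) (B : {set Omega})
    (F F' : seq wtree) : Prop :=
  let P := fun v : nat * {set Omega} => inGp Acal v.2 B in
  if has P (vlistF 1 F) then
    attachF Acal B (\max_(v <- vlistF 1 F | P v) v.1) F F'
  else if S :&: vbl B != set0 then F' = WNode B [::] :: F
  else F' = F.

Fixpoint tau_run Acal S (l : seq {set Omega}) (F F' : seq wtree) : Prop :=
  match l with
  | [::] => F' = F
  | B :: l' => exists F1, tau_step Acal S B F F1 /\ tau_run Acal S l' F1 F'
  end.

(* F is a possible forest (under the root labelled S) of tau_C(t, S); the
   events C(t-1), ..., C(1) are processed in this order; C(i) = nth set0 C i.-1 *)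
Definition tauC Acal (C : seq {set Omega}) (t : nat) (S : {set V})
    (F : seq wtree) : Prop :=
  tau_run Acal S (rev (take t.-1 C)) [::] F.

Definition occurs Acal T rule (BT : {set Omega} -> btree) (S : {set V})
    (F : seq wtree) : Prop :=
  exists n t, let C := alg_log Acal T rule n in
    [/\ 0 < t <= size C, S \in blabels (BT (nth set0 C t.-1)) &
        exists2 F0, tauC Acal C t S F0 & feq F F0].

(* visiting the vertices in the order ord; cnt p = number of values of row p
   already used *)
Fixpoint tcheck_from (T : forall p : V, nat -> D p) (cnt : V -> nat)
    (ord : seq (nat * {set Omega})) : bool :=
  match ord with
  | [::] => true
  | (_, B) :: ord' =>
    (evalT T (fun p => (cnt p).+1) \in B) &&
    tcheck_from T (fun p => cnt p + (p \in vbl B)) ord'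
  end.

Definition passes_tcheck (T : forall p : V, nat -> D p) (F : seq wtree) : Prop :=
  forall ord, perm_eq ord (vlistF 1 F) ->
    sorted (fun x y : nat * {set Omega} => y.1 <= x.1) ord ->
    tcheck_from T (fun _ => 0) ord.

End MT.

From Pilot Require Import Defs.
From mathcomp Require Import all_boot zify.
Set Implicit Arguments. Unset Strict Implicit. Unset Printing Implicit Defensive.

(* Building tau_C(t, S) backwards through the log keeps an invariant on the
   steps i whose event C(i) became a vertex: if C(i) and C(j), i < j, share a
   variable, then C(i) sits strictly deeper than C(j), and every C(i) with
   i < j that shares a variable with a vertex C(j) is itself a vertex.
   Properness holds because a new child labelled B is attached at a deepest
   vertex in Gamma^+(B); as B is in Gamma^+(B), no vertex labelled B can sit
   one level lower.  In the T-check, the values of row p consumed before a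
   vertex C(i) with p in vbl(C(i)) are those of the deeper vertices using p,
   i.e. of the steps before i whose event contains p: precisely the values
   under which Algorithm 2 saw C(i) happen. *)

Lemma perm_cat_catCA (T : eqType) (s s' r r1 r2 : seq T) :
  perm_eq s s' -> perm_eq r (r1 ++ r2) -> perm_eq (s ++ r) (r1 ++ s' ++ r2).
Proof. by move=> hs hr; rewrite perm_sym perm_catCA perm_sym perm_cat. Qed.

Lemma count_take_sorted (T : eqType) (key : T -> nat) (Q : pred T) (s : seq T) x0 k :
  sorted (fun x y => key y <= key x) s -> k < size s ->
  let z := nth x0 s k in
  Q z -> count (fun y => Q y && (key y == key z)) s <= 1 ->
  count Q (take k s) = count (fun y => Q y && (key z < key y)) s.
Proof.
move=> hsort hk z hQz; set s1 := take k s; set s2 := drop k.+1 s.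
have hs : s = s1 ++ z :: s2 by rewrite -drop_nth // cat_take_drop.
have htr : transitive (fun x y => key y <= key x) by move=> ? ? ? h1 h2; apply: leq_trans h2 h1.
move: hsort; rewrite hs (sorted_pairwise htr) pairwise_cat /=.
case/and4P=> /allrelP hpre _ /allP hpost _.
rewrite !count_cat /= eqxx hQz ltnn /= add0n => hz.
have /hasPn hs1 : ~~ has (fun y => Q y && (key y == key z)) s1 by rewrite has_count; lia.
rewrite (@eq_in_count _ _ pred0 s2) ?count_pred0 ?addn0; last first.
  by move=> y /hpost /=; rewrite ltnNge => ->; rewrite andbF.
apply: eq_in_count => y hy /=; case: (boolP (Q y)) => //= hQy.
rewrite ltn_neqAle eq_sym (hpre _ _ hy (mem_head _ _)) andbT.
by have := hs1 y hy; rewrite hQy.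
Qed.

Lemma uniq_map_inj_in (T1 T2 : eqType) (f : T1 -> T2) (s : seq T1) :
  uniq (map f s) -> {in s &, injective f}.
Proof.
elim: s => //= a s IH /andP[ha hu] x y; rewrite !in_cons.
case/orP=> [/eqP-> | hx] /orP[/eqP-> | hy] e //.
- by move: ha; rewrite e map_f.
- by move: ha; rewrite -e map_f.
- exact: IH.
Qed.

Scheme teq_ind2 := Induction for teq Sort Prop
with feq_ind2 := Induction for feq Sort Prop.
Combined Scheme teq_feq_ind from teq_ind2, feq_ind2.

Section Forests.
Variables (V : finType) (D : V -> finType).
Implicit Types (t : wtree D) (F cs ds : seq (wtree D)).

Lemma vlistF_cat k F1 F2 : vlistF k (F1 ++ F2) = vlistF k F1 ++ vlistF k F2.
Proof. by rewrite /vlistF map_cat flatten_cat. Qed.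

Lemma vlistF_cons k t F : vlistF k (t :: F) = vlistT k t ++ vlistF k F.
Proof. by []. Qed.

Lemma teq_feq_invariant :
  (forall t t', teq t t' ->
     [/\ wlab t = wlab t', Defs.properT t = Defs.properT t' &
         forall k, perm_eq (vlistT k t) (vlistT k t')]) /\
  (forall cs ds, feq cs ds ->
     [/\ perm_eq (map (@wlab _ _) cs) (map (@wlab _ _) ds),
         all (@Defs.properT _ _) cs = all (@Defs.properT _ _) ds &
         forall k, perm_eq (vlistF k cs) (vlistF k ds)]).
Proof.
apply: teq_feq_ind => [a cs ds _ [hlab hprop hvl] | |
                       t t' cs ds1 ds2 _ [elab eprop evl] _ [flab fprop fvl]].
- split=> //=; last by move=> k; rewrite perm_cons; apply: hvl.
  by rewrite (perm_uniq hlab) hprop.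
- by [].
- split.
  + rewrite map_cat /= elab.
    by apply: (@perm_cat_catCA _ [:: wlab t'] [:: wlab t']); rewrite // -map_cat.
  + by rewrite /= fprop !all_cat /= eprop andbCA.
  + by move=> k; rewrite vlistF_cons vlistF_cat vlistF_cons perm_cat_catCA // -vlistF_cat.
Qed.

Lemma feq_invariant cs ds : feq cs ds ->
  [/\ perm_eq (map (@wlab _ _) cs) (map (@wlab _ _) ds),
      all (@Defs.properT _ _) cs = all (@Defs.properT _ _) ds &
      forall k, perm_eq (vlistF k cs) (vlistF k ds)].
Proof. exact: teq_feq_invariant.2. Qed.

Lemma feq_proper cs ds : feq cs ds -> proper_pwt cs = proper_pwt ds.
Proof. by case/feq_invariant => hlab hprop _; rewrite /proper_pwt (perm_uniq hlab) hprop. Qed.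

Lemma wlab_vlistF k B F : B \in map (@wlab _ _) F -> (k, B) \in vlistF k F.
Proof.
elim: F => //= [[b ds] F IH]; rewrite in_cons vlistF_cons mem_cat.
by case/orP=> [/eqP-> | /IH->]; rewrite ?orbT //= mem_head.
Qed.

Lemma vlistF_replace k F1 F2 a cs cs' x :
  perm_eq (vlistF k.+1 cs') (x :: vlistF k.+1 cs) ->
  perm_eq (vlistF k (F1 ++ WNode a cs' :: F2)) (x :: vlistF k (F1 ++ WNode a cs :: F2)).
Proof.
move/permP=> hcs; apply/permP=> P.
rewrite !vlistF_cat !vlistF_cons /= !count_cat /= -/(vlistF k.+1 cs') -/(vlistF k.+1 cs).
by rewrite !count_cat hcs /=; lia.
Qed.

Lemma vlistF_subforest k F1 F2 a cs x :
  x \in vlistF k.+1 cs -> x \in vlistF k (F1 ++ WNode a cs :: F2).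
Proof.
move=> hx; rewrite vlistF_cat vlistF_cons mem_cat; apply/orP; right.
by rewrite mem_cat /= in_cons -/(vlistF k.+1 cs) hx orbT.
Qed.

Lemma proper_pwt_subforest F1 F2 a cs :
  proper_pwt (F1 ++ WNode a cs :: F2) -> proper_pwt cs.
Proof. by case/andP=> _; rewrite all_cat => /and3P[_ /andP[hu ha] _]; apply/andP. Qed.

Lemma proper_pwt_replace F1 F2 a cs cs' :
  proper_pwt (F1 ++ WNode a cs :: F2) -> proper_pwt cs' ->
  proper_pwt (F1 ++ WNode a cs' :: F2).
Proof. by rewrite /proper_pwt !map_cat !all_cat /= => /and4P[-> -> _ ->] /andP[-> ->]. Qed.

Section Attach.
Variables (Acal : {set {set Omega D}}) (B : {set Omega D}).

Lemma attachF_vlistF d k F F' :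
  attachF Acal B d F F' -> perm_eq (vlistF k F') ((k + d, B) :: vlistF k F).
Proof.
elim: d k F F' => [//|[|d] IH] k F F' [F1 [a [cs [F2 [-> hF']]]]].
- by case: hF' => _ ->; rewrite addn1; apply: vlistF_replace.
- case: hF' => cs' [/(IH k.+1) hcs ->]; apply: vlistF_replace.
  by rewrite -addSnnS.
Qed.

Lemma attachF_proper d k F F' :
  attachF Acal B d F F' -> (k + d, B) \notin vlistF k F ->
  proper_pwt F -> proper_pwt F'.
Proof.
elim: d k F F' => [//|[|d] IH] k F F' [F1 [a [cs [F2 [-> hF']]]]] hB hF;
  have hcs := proper_pwt_subforest hF.
- case: hF' => _ ->; apply: (proper_pwt_replace hF).
  move: hcs; rewrite /proper_pwt /= => /andP[-> ->]; rewrite !andbT.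
  apply: contra hB => /(wlab_vlistF k.+1) hB.
  by rewrite addn1; apply: vlistF_subforest.
- case: hF' => cs' [hatt ->]; apply: (proper_pwt_replace hF).
  apply: (IH k.+1 cs) => //; apply: contra hB => hB.
  by rewrite -addSnnS; apply: vlistF_subforest.
Qed.

End Attach.

End Forests.

Lemma feq_passes_tcheck (V : finType) (D : V -> finType) T (F F0 : seq (wtree D)) :
  feq F F0 -> passes_tcheck T F0 -> passes_tcheck T F.
Proof.
case/feq_invariant=> _ _ hvl hF0 ord hord; apply: hF0.
exact: perm_trans hord (hvl 1).
Qed.

Section EventVariables.
Variables (V : finType) (D : V -> finType).
Implicit Types (A B : {set Omega D}) (S : {set V}) (w : Omega D).

Lemma determines_agree S A w w' : determines S A ->
  {in S, forall p, w p = w' p} -> (w \in A) = (w' \in A).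
Proof.
move/forallP/(_ w)/forallP/(_ w')/implyP=> hA hS; apply/eqP/hA.
by apply/forallP=> p; apply/implyP=> /hS ->.
Qed.

Lemma determines_setI S1 S2 A :
  determines S1 A -> determines S2 A -> determines (S1 :&: S2) A.
Proof.
move=> h1 h2; apply/forallP=> w; apply/forallP=> w'; apply/implyP=> /forallP hw.
pose w'' : Omega D := [ffun p => if p \in S1 then w p else w' p].
apply/eqP; rewrite (determines_agree (w' := w'') h1); last by move=> p hp; rewrite ffunE hp.
apply: (determines_agree h2) => p hp2; rewrite ffunE; case: ifP => // hp1.
by apply/eqP; have := hw p; rewrite inE hp1 hp2.
Qed.

Lemma vbl_determines A : determines (vbl A) A.
Proof.
rewrite /vbl; apply: (big_ind (fun S => determines S A)) => [||//]; first last.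
  by move=> S1 S2; apply: determines_setI.
apply/forallP=> w; apply/forallP=> w'; apply/implyP=> /forallP hw.
suff -> : w = w' by [].
by apply/ffunP=> p; apply/eqP; have := hw p; rewrite inE.
Qed.

Definition share A B := vbl A :&: vbl B != set0.

Lemma share_sym A B : share A B = share B A.
Proof. by rewrite /share setIC. Qed.

Lemma shareP p A B : p \in vbl A -> p \in vbl B -> share A B.
Proof. by move=> hA hB; apply/set0Pn; exists p; rewrite inE hA hB. Qed.

Lemma inGp_refl (Acal : {set {set Omega D}}) A : inGp Acal A A.
Proof. by rewrite /inGp eqxx. Qed.

Lemma inGp_share (Acal : {set {set Omega D}}) A B : B \in Acal -> share A B -> inGp Acal A B.
Proof. by move=> hB hAB; rewrite /inGp hB; case: eqP. Qed.

Definition ptr_after (log : seq {set Omega D}) (p : V) : nat :=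
  (count (fun B => p \in vbl B) log).+1.

Lemma evalT_ext (T : forall p : V, nat -> D p) (f g : V -> nat) :
  f =1 g -> evalT T f = evalT T g.
Proof. by move=> hfg; apply/ffunP=> p; rewrite !ffunE hfg. Qed.

Lemma tcheck_from_nth (T : forall p : V, nat -> D p) (cnt : V -> nat)
    (ord : seq (nat * {set Omega D})) :
  (forall k, k < size ord ->
     evalT T (fun p => (cnt p + count (fun y => p \in vbl y.2) (take k ord)).+1)
       \in (nth (0, set0) ord k).2) ->
  tcheck_from T cnt ord.
Proof.
elim: ord cnt => //= [[d B] ord IH] cnt hord.
apply/andP; split.
  by move: (hord 0 isT); rewrite (evalT_ext _ (g := fun p => (cnt p).+1)) // => p; rewrite addn0.
apply: IH => k hk; move: (hord k.+1 hk) => /=.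
rewrite (evalT_ext _ (g := fun p =>
  (cnt p + (p \in vbl B) + count (fun y => p \in vbl y.2) (take k ord)).+1)) // => p.
by rewrite addnA.
Qed.

Section Algorithm.
Variables (Acal : {set {set Omega D}}) (T : forall p : V, nat -> D p).
Variable rule : seq {set Omega D} -> {set {set Omega D}} -> {set Omega D}.
Hypothesis hrule : forall h H, H != set0 -> rule h H \in H.

Lemma alg_iter_inv n :
  let: (ptr, log) := iter n (alg_step Acal T rule) (fun _ => 1, [::]) in
  ptr =1 ptr_after log /\
  forall k, k < size log ->
    nth set0 log k \in Acal /\ evalT T (ptr_after (take k log)) \in nth set0 log k.
Proof.
elim: n => [|n /=]; first by split.
case: (iter n _ _) => ptr log /= [hptr hlog].
rewrite /alg_step; case: ifP => [_|/negbT /(hrule log)]; first by split.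
rewrite inE; set A := rule log _ => /andP[hA hAptr]; split.
  by move=> p; rewrite hptr /ptr_after -cats1 count_cat /= addn0 addSn.
move=> k; rewrite size_rcons ltnS leq_eqVlt => /orP[/eqP-> | hk].
  rewrite nth_rcons ltnn eqxx -cats1 take_size_cat //; split=> //.
  by rewrite -(evalT_ext _ hptr).
by rewrite nth_rcons hk -cats1 takel_cat; [exact: hlog | exact: ltnW].
Qed.

Lemma alg_log_happens n k : let C := alg_log Acal T rule n in
  k < size C -> nth set0 C k \in Acal /\ evalT T (ptr_after (take k C)) \in nth set0 C k.
Proof.
rewrite /alg_log; have := alg_iter_inv n.
by case: (iter n _ _) => ptr log /= [_ hlog]; apply: hlog.
Qed.

End Algorithm.
End EventVariables.

Section Construction.
Variables (V : finType) (D : V -> finType).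
Variables (Acal : {set {set Omega D}}) (C : seq {set Omega D}).
Hypothesis hC : forall j, j < size C -> nth set0 C j \in Acal.

Local Notation ev j := (nth set0 C j).

(* A record [(d, j)] stands for a vertex of depth [d] labelled [C(j+1)]. *)
Definition tau_vertex (x : nat * nat) : nat * {set Omega D} := (x.1, ev x.2).

Record tau_inv (m : nat) (F : seq (wtree D)) (L : seq (nat * nat)) : Prop := TauInv {
  tau_inv_vlist : perm_eq (vlistF 1 F) (map tau_vertex L);
  tau_inv_uniq : uniq (map snd L);
  tau_inv_range : all (fun x => m <= x.2 < size C) L;
  tau_inv_deeper : forall x y, x \in L -> y \in L -> y.2 < x.2 ->
    share (ev x.2) (ev y.2) -> x.1 < y.1;
  tau_inv_closed : forall x j, x \in L -> m <= j < x.2 ->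
    share (ev x.2) (ev j) -> j \in map snd L;
  tau_inv_proper : proper_pwt F }.

Lemma tau_inv_nil m : tau_inv m [::] [::].
Proof. by split. Qed.

Lemma tau_inv_push m F F' L e : m < size C -> tau_inv m.+1 F L ->
  perm_eq (vlistF 1 F') ((e, ev m) :: vlistF 1 F) ->
  (forall x, x \in L -> share (ev x.2) (ev m) -> x.1 < e) -> proper_pwt F' ->
  tau_inv m F' ((e, m) :: L).
Proof.
move=> hm [hvl hu hr hdeep hcl _] hF' hdepth hprop.
have hrange x : x \in L -> m < x.2 < size C by move/(allP hr).
split=> //.
- by apply: (perm_trans hF'); rewrite /= perm_cons.
- rewrite /= hu andbT; apply/mapP=> -[x /hrange hx hxm].
  by move: hx; rewrite -hxm ltnn.
- rewrite /= leqnn hm; apply/allP=> x /hrange /andP[hmx ->].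
  by rewrite ltnW.
- move=> x y; rewrite !in_cons => /orP[/eqP-> | hx] /orP[/eqP-> | hy] //=.
  + by rewrite ltnn.
  + by have /andP[hmy _] := hrange y hy; rewrite ltnNge ltnW.
  + by move=> _; apply: hdepth.
  + exact: hdeep.
- move=> x j; rewrite in_cons => /orP[/eqP-> | hx] /=; first by case: ltngtP.
  move=> /andP[hmj hjx] hs; rewrite in_cons; case: (eqVneq j m) => //= hjm.
  by apply: hcl hx _ hs; rewrite hjx andbT ltn_neqAle eq_sym hjm.
Qed.

Lemma tau_inv_skip m F L : tau_inv m.+1 F L ->
  (forall x, x \in L -> ~~ share (ev x.2) (ev m)) -> tau_inv m F L.
Proof.
move=> [hvl hu hr hdeep hcl hprop] hnsh; split=> //.
- by apply/allP=> x /(allP hr) /andP[/ltnW -> ->].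
- move=> x j hx /andP[hmj hjx] hs; case: (eqVneq j m) => [ejm | hjm].
    by move: (hnsh x hx); rewrite -ejm hs.
  by apply: hcl hx _ hs; rewrite hjx andbT ltn_neqAle eq_sym hjm.
Qed.

Lemma tau_step_inv S m F F' L : m < size C -> tau_inv m.+1 F L ->
  tau_step Acal S (ev m) F F' -> exists L', tau_inv m F' L'.
Proof.
move=> hm hI; have hvert x : x \in L -> tau_vertex x \in vlistF 1 F.
  by move=> hx; rewrite (perm_mem (tau_inv_vlist hI)) map_f.
rewrite /tau_step; case: ifP => [_ | /negbT /hasPn hnP].
- set d := \max_(_ <- _ | _) _ => hatt.
  have hmax v : v \in vlistF 1 F -> inGp Acal v.2 (ev m) -> v.1 <= d.
    by move=> hv hG; apply: (leq_bigmax_seq v hv hG).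
  exists ((d.+1, m) :: L); apply: (tau_inv_push hm hI).
  + by have := attachF_vlistF 1 hatt; rewrite add1n.
  + by move=> x hx hs; rewrite ltnS (hmax _ (hvert x hx)) // inGp_share ?hC.
  + apply: attachF_proper hatt _ (tau_inv_proper hI).
    by apply/negP=> /hmax /(_ (inGp_refl _ _)); rewrite add1n ltnn.
- have hnsh x : x \in L -> ~~ share (ev x.2) (ev m).
    by move=> hx; apply: contra (hnP _ (hvert x hx)); apply: inGp_share; rewrite ?hC.
  case: ifP => _ ->; last by exists L; apply: tau_inv_skip.
  exists ((1, m) :: L); apply: (tau_inv_push hm hI).
  + exact: perm_refl.
  + by move=> x /hnsh /negPf ->.
  + move: (tau_inv_proper hI); rewrite /proper_pwt /= => /andP[-> ->]; rewrite !andbT.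
    by apply/negP=> /(wlab_vlistF 1) /hnP; rewrite inGp_refl.
Qed.

Lemma tau_run_inv S m F F' L : m <= size C -> tau_inv m F L ->
  tau_run Acal S (rev (take m C)) F F' -> exists L', tau_inv 0 F' L'.
Proof.
elim: m F L => [|m IH] F L hm hI; first by rewrite take0 => /= ->; exists L.
rewrite (take_nth set0 hm) rev_rcons => -[F1 [hstep hrun]].
have [L1 hI1] := tau_step_inv hm hI hstep.
exact: IH (ltnW hm) hI1 hrun.
Qed.

End Construction.

Section Counting.
Variables (V : finType) (D : V -> finType).
Variables (C : seq {set Omega D}) (F : seq (wtree D)) (L : seq (nat * nat)).
Hypothesis hI : tau_inv C 0 F L.

Local Notation ev j := (nth set0 C j).

Lemma tau_inv_share_depth x y : x \in L -> y \in L -> share (ev x.2) (ev y.2) ->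
  (x.1 < y.1) = (y.2 < x.2) /\ (y.1 == x.1) = (y == x).
Proof.
move=> hx hy hs; case: (ltngtP y.2 x.2) => [hyx | hxy | exy].
- have hd := tau_inv_deeper hI hx hy hyx hs.
  split; first by rewrite hd.
  by rewrite gtn_eqF //; apply/esym/negbTE; apply: contraTneq hyx => ->; rewrite ltnn.
- have hd : y.1 < x.1 by apply: (tau_inv_deeper hI hy hx hxy); rewrite share_sym.
  split; first by rewrite ltnNge ltnW.
  by rewrite ltn_eqF //; apply/esym/negbTE; apply: contraTneq hxy => ->; rewrite ltnn.
- by rewrite (uniq_map_inj_in (tau_inv_uniq hI) hy hx exy) ltnn !eqxx.
Qed.

Lemma tau_inv_count_same_depth x p : x \in L -> p \in vbl (ev x.2) ->
  count (fun y => (p \in vbl y.2) && (y.1 == x.1)) (map (tau_vertex C) L) <= 1.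
Proof.
move=> hx hp; rewrite count_map (@eq_in_count _ _ (pred1 x)).
  by rewrite count_uniq_mem ?leq_b1 // (map_uniq (tau_inv_uniq hI)).
move=> y hy /=; case: (boolP (p \in vbl (ev y.2))) => hpy /=.
  by rewrite (tau_inv_share_depth hx hy (shareP hp hpy)).2.
by apply/esym; apply: contraNF hpy => /eqP->.
Qed.

Lemma tau_inv_count_deeper x p : x \in L -> p \in vbl (ev x.2) ->
  count (fun y => (p \in vbl y.2) && (x.1 < y.1)) (map (tau_vertex C) L) =
  count (fun B => p \in vbl B) (take x.2 C).
Proof.
move=> hx hp; have /andP[_ hxC] := allP (tau_inv_range hI) x hx.
rewrite count_map (@eq_in_count _ _ (fun y => (p \in vbl (ev y.2)) && (y.2 < x.2))); last first.
  move=> y hy /=; case: (boolP (p \in vbl (ev y.2))) => //= hpy.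
  exact: (tau_inv_share_depth hx hy (shareP hp hpy)).1.
rewrite -(map_nth_iota0 set0 (ltnW hxC)) count_map.
rewrite -(count_map snd (fun j => (p \in vbl (ev j)) && (j < x.2))) -!size_filter.
apply: perm_size; apply: uniq_perm; rewrite ?filter_uniq ?iota_uniq ?(tau_inv_uniq hI) // => j.
rewrite !mem_filter mem_iota /=; case: (boolP (p \in vbl (ev j))) => //= hpj.
case: (boolP (j < x.2)) => //= hjx.
exact: (tau_inv_closed hI hx hjx (shareP hp hpj)).
Qed.

Lemma tau_inv_passes_tcheck (T : forall p : V, nat -> D p) :
  (forall k, k < size C -> evalT T (ptr_after (take k C)) \in ev k) ->
  passes_tcheck T F.
Proof.
move=> hev ord hord hsort; apply: tcheck_from_nth => k hk.
have hpo : perm_eq ord (map (tau_vertex C) L) := perm_trans hord (tau_inv_vlist hI).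
have : nth (0, set0) ord k \in map (tau_vertex C) L by rewrite -(perm_mem hpo) mem_nth.
case/mapP=> x hx ez; have /andP[_ hxC] := allP (tau_inv_range hI) x hx.
rewrite ez (determines_agree (w' := evalT T (ptr_after (take x.2 C))) (vbl_determines _)).
  exact: hev.
move=> p hp; rewrite !ffunE /ptr_after add0n; congr (T p _.+1).
rewrite (count_take_sorted (x0 := (0, set0)) hsort hk) ?ez //.
  by rewrite (permP hpo) tau_inv_count_deeper.
by rewrite (permP hpo) tau_inv_count_same_depth.
Qed.

End Counting.

Theorem lemma3p1 (V : finType) (D : V -> finType)
    (Acal : {set {set Omega D}})
    (BT : {set Omega D} -> btree V)
    (hBT : forall A, A \in Acal -> btree_wf (BT A) /\ blabel (BT A) = vbl A)
    (T : forall p : V, nat -> D p)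
    (rule : seq {set Omega D} -> {set {set Omega D}} -> {set Omega D})
    (hrule : forall (h : seq {set Omega D}) (H : {set {set Omega D}}),
               H != set0 -> rule h H \in H)
    (S : {set V}) (F : seq (wtree D)) :
  is_pwt Acal BT S F -> occurs Acal T rule BT S F ->
  proper_pwt F /\ passes_tcheck T F.
Proof.
move=> _ [n [t [/andP[_ htC] _ [F0 hrun hfeq]]]].
set C := alg_log Acal T rule n in htC hrun.
have hC j : j < size C -> nth set0 C j \in Acal by case/(alg_log_happens hrule).
have [L hL] : exists L, tau_inv C 0 F0 L.
  apply: (tau_run_inv hC _ (tau_inv_nil C t.-1) hrun).
  exact: leq_trans (leq_pred t) htC.
split; first by rewrite (feq_proper hfeq); apply: tau_inv_proper hL.
apply: feq_passes_tcheck hfeq (tau_inv_passes_tcheck hL _).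
by move=> k /(alg_log_happens hrule) [].
Qed.
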